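(* For every class of closed formulas $\mathbb{P}$ and every $n$, every safety problem provable in $\mathbf{FBI}^{\mathbb{P}}_n$ is also provable in $\mathbf{F}^{\mathbb{P}_n}$, where $\mathbb{P}_n$ consists of all Boolean combinations of at most $n$ predicates from $\mathbb{P}$. Moreover, for every $n>0$ there exist a class of predicates $\mathbb{P}$ and a safety problem $\Pi$ such that $\Pi$ is provable in $\mathbf{FBI}^{\mathbb{P}}_n$ but is provable in none of $\mathbf{FBI}^{\mathbb{P}}_{n-1}$, $\mathbf{FI}^{\mathbb{P}}$, $\mathbf{F}^{\mathbb{P}}$.
   Context: A first-order vocabulary $\Sigma$ consists of constant, function and relation symbols; $\Sigma'=\{a' : a\in\Sigma\}$ is a disjoint copy, and for a formula $\varphi$ over $\Sigma$, $\varphi'$ denotes $\varphi$ with every symbol replaced by its primed copy. A safety problem is a triple $(\iota,\tau,\beta)$, where $\iota,\beta$ are closed formulas over $\Sigma$ and $\tau$ is a closed formula over $\Sigma\uplus\Sigma'$. $A\Rightarrow B$ means the implication $A\to B$ is valid. $\tau^{-1}$ denotes $\tau$ with each symbol of $\Sigma$ and its primed counterpart swapped. Proofs: a proof of $\Pi$ in a system is a finite tree whose nodes are safety problems, whose root is $\Pi$, and in which each node together with its children is an instance of one of the system's rules, with side conditions valid. Rules ($\varphi$ ranges over closed formulas over $\Sigma$): (Ind): no premises; conclusion $(\iota,\tau,\neg\varphi)$; side conditions $\iota\Rightarrow\varphi$ and $\varphi\wedge\tau\Rightarrow\varphi'$. (Cons): premise $(\iota,\tau,\neg\varphi)$; conclusion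 $(\iota,\tau,\beta)$; side condition $\varphi\Rightarrow\neg\beta$. (Inc): premises $(\iota,\tau,\neg\varphi)$ and $(\iota\wedge\varphi,\ \tau\wedge\varphi\wedge\varphi',\ \beta\wedge\varphi)$; conclusion $(\iota,\tau,\beta)$. (Rev): premise $(\beta,\tau^{-1},\iota)$; conclusion $(\iota,\tau,\beta)$. $\mathbf{F}=\{$Ind, Cons$\}$, $\mathbf{FI}=\mathbf{F}\cup\{$Inc$\}$, $\mathbf{FBI}=\mathbf{FI}\cup\{$Rev$\}$. For a class of closed formulas $\mathbb{P}$, $X^{\mathbb{P}}$ denotes system $X$ with applications of (Ind) restricted to $\varphi\in\mathbb{P}$, and $X^{\mathbb{P}}_n$ further restricts proofs to at most $n$ applications of (Ind). *)

From Stdlib Require Import List Arith.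
Import ListNotations.

Record sig : Type := Sig {
  fsym : Type;
  rsym : Type;
  far : fsym -> nat;
  rar : rsym -> nat
}.

(* Sigma (+) Sigma' : inl = unprimed symbol, inr = primed copy. *)
Definition sig2 (S : sig) : sig :=
  {| fsym := fsym S + fsym S;
     rsym := rsym S + rsym S;
     far := fun f => match f with inl g | inr g => far S g end;
     rar := fun r => match r with inl g | inr g => rar S g end |}.

Inductive term (S : sig) : Type :=
| Var : nat -> term S
| App : fsym S -> list (term S) -> term S.
Arguments Var {S}. Arguments App {S}.

Inductive formula (S : sig) : Type :=
| FTrue : formula S
| FFalse : formula S
| FRel : rsym S -> list (term S) -> formula S
| FEq : term S -> term S -> formula S
| FNot : formula S -> formula S
| FAnd : formula S -> formula S -> formula S
| FOr : formula S -> formula S -> formula S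
| FImp : formula S -> formula S -> formula S
| FAll : nat -> formula S -> formula S
| FEx : nat -> formula S -> formula S.
Arguments FTrue {S}. Arguments FFalse {S}. Arguments FRel {S}.
Arguments FEq {S}. Arguments FNot {S}. Arguments FAnd {S}.
Arguments FOr {S}. Arguments FImp {S}. Arguments FAll {S}. Arguments FEx {S}.

Fixpoint wf_term {S : sig} (t : term S) : Prop :=
  match t with
  | Var _ => True
  | App f args =>
      length args = far S f /\
      (fix wl (l : list (term S)) : Prop :=
         match l with [] => True | u :: l' => wf_term u /\ wl l' end) args
  end.

Fixpoint wf {S : sig} (p : formula S) : Prop :=
  match p with
  | FTrue | FFalse => True
  | FRel r args => length args = rar S r /\ Forall wf_term args
  | FEq t u => wf_term t /\ wf_term u
  | FNot a => wf a
  | FAnd a b | FOr a b | FImp a b => wf a /\ wf b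
  | FAll _ a | FEx _ a => wf a
  end.

Fixpoint fv_term {S : sig} (t : term S) : list nat :=
  match t with
  | Var x => [x]
  | App _ args =>
      (fix fl (l : list (term S)) : list nat :=
         match l with [] => [] | u :: l' => fv_term u ++ fl l' end) args
  end.

Fixpoint fv {S : sig} (p : formula S) : list nat :=
  match p with
  | FTrue | FFalse => []
  | FRel _ args => flat_map fv_term args
  | FEq t u => fv_term t ++ fv_term u
  | FNot a => fv a
  | FAnd a b | FOr a b | FImp a b => fv a ++ fv b
  | FAll x a | FEx x a => filter (fun y => negb (Nat.eqb y x)) (fv a)
  end.

Definition closed {S : sig} (p : formula S) : Prop := wf p /\ fv p = [].

(* Structures (nonempty domain). Function/relation symbols are interpreted
   on argument lists; on well-formed formulas only lists of the correct
   length are ever used. *)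
Record structure (S : sig) : Type := Struct {
  dom : Type;
  dom_inh : dom;
  ifun : fsym S -> list dom -> dom;
  irel : rsym S -> list dom -> Prop
}.
Arguments dom {S}. Arguments ifun {S}. Arguments irel {S}.

Definition upd {D : Type} (e : nat -> D) (x : nat) (d : D) : nat -> D :=
  fun y => if Nat.eqb y x then d else e y.

Fixpoint eval {S : sig} (M : structure S) (e : nat -> dom M) (t : term S)
  : dom M :=
  match t with
  | Var x => e x
  | App f args => ifun M f (map (eval M e) args)
  end.

Fixpoint sat {S : sig} (M : structure S) (e : nat -> dom M) (p : formula S)
  : Prop :=
  match p with
  | FTrue => True
  | FFalse => False
  | FRel r args => irel M r (map (eval M e) args)
  | FEq t u => eval M e t = eval M e u
  | FNot a => ~ sat M e a
  | FAnd a b => sat M e a /\ sat M e b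
  | FOr a b => sat M e a \/ sat M e b
  | FImp a b => sat M e a -> sat M e b
  | FAll x a => forall d : dom M, sat M (upd e x d) a
  | FEx x a => exists d : dom M, sat M (upd e x d) a
  end.

Definition valid {S : sig} (p : formula S) : Prop :=
  forall (M : structure S) (e : nat -> dom M), sat M e p.

Definition entails {S : sig} (a b : formula S) : Prop := valid (FImp a b).

Fixpoint rn_term {S1 S2 : sig} (g : fsym S1 -> fsym S2) (t : term S1)
  : term S2 :=
  match t with
  | Var x => Var x
  | App f args => App (g f) (map (rn_term g) args)
  end.

Fixpoint rn {S1 S2 : sig} (g : fsym S1 -> fsym S2) (h : rsym S1 -> rsym S2)
  (p : formula S1) : formula S2 :=
  match p with
  | FTrue => FTrue
  | FFalse => FFalse
  | FRel r args => FRel (h r) (map (rn_term g) args)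
  | FEq t u => FEq (rn_term g t) (rn_term g u)
  | FNot a => FNot (rn g h a)
  | FAnd a b => FAnd (rn g h a) (rn g h b)
  | FOr a b => FOr (rn g h a) (rn g h b)
  | FImp a b => FImp (rn g h a) (rn g h b)
  | FAll x a => FAll x (rn g h a)
  | FEx x a => FEx x (rn g h a)
  end.

Definition unprimed {S : sig} (p : formula S) : formula (sig2 S) :=
  @rn S (sig2 S) inl inl p.
Definition primed {S : sig} (p : formula S) : formula (sig2 S) :=
  @rn S (sig2 S) inr inr p.

Definition swap {A : Type} (x : A + A) : A + A :=
  match x with inl a => inr a | inr a => inl a end.
Definition inv {S : sig} (t : formula (sig2 S)) : formula (sig2 S) :=
  @rn (sig2 S) (sig2 S) swap swap t.

Definition safety {S : sig} (i : formula S) (t : formula (sig2 S))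
  (b : formula S) : Prop := closed i /\ closed t /\ closed b.

Inductive system := SysF | SysFI | SysFBI.
Definition has_inc (X : system) : bool :=
  match X with SysF => false | _ => true end.
Definition has_rev (X : system) : bool :=
  match X with SysFBI => true | _ => false end.

(* deriv X P k i t b : there is a proof tree in system X (with (Ind)
   restricted to P) with root (i,t,b) and exactly k applications of (Ind). *)
Inductive deriv {S : sig} (X : system) (P : formula S -> Prop)
  : nat -> formula S -> formula (sig2 S) -> formula S -> Prop :=
| d_ind : forall i t phi,
    P phi -> closed phi ->
    entails i phi ->
    entails (FAnd (unprimed phi) t) (primed phi) ->
    deriv X P 1 i t (FNot phi)
| d_cons : forall k i t b phi,
    closed phi ->
    deriv X P k i t (FNot phi) ->
    entails phi (FNot b) ->
    deriv X P k i t b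
| d_inc : forall k1 k2 i t b phi,
    has_inc X = true ->
    closed phi ->
    deriv X P k1 i t (FNot phi) ->
    deriv X P k2 (FAnd i phi)
          (FAnd t (FAnd (unprimed phi) (primed phi))) (FAnd b phi) ->
    deriv X P (k1 + k2) i t b
| d_rev : forall k i t b,
    has_rev X = true ->
    deriv X P k b (inv t) i ->
    deriv X P k i t b.

Definition provable {S : sig} (X : system) (P : formula S -> Prop)
  (i : formula S) (t : formula (sig2 S)) (b : formula S) : Prop :=
  safety i t b /\ exists k, deriv X P k i t b.

Definition provable_n {S : sig} (X : system) (P : formula S -> Prop) (n : nat)
  (i : formula S) (t : formula (sig2 S)) (b : formula S) : Prop :=
  safety i t b /\ exists k, k <= n /\ deriv X P k i t b.

Inductive bool_comb {S : sig} (l : list (formula S)) : formula S -> Prop :=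
| bc_atom : forall p, In p l -> bool_comb l p
| bc_true : bool_comb l FTrue
| bc_false : bool_comb l FFalse
| bc_not : forall a, bool_comb l a -> bool_comb l (FNot a)
| bc_and : forall a b, bool_comb l a -> bool_comb l b -> bool_comb l (FAnd a b)
| bc_or : forall a b, bool_comb l a -> bool_comb l b -> bool_comb l (FOr a b)
| bc_imp : forall a b, bool_comb l a -> bool_comb l b -> bool_comb l (FImp a b).

Definition Pn {S : sig} (P : formula S -> Prop) (n : nat) : formula S -> Prop :=
  fun p => exists l : list (formula S),
    length l <= n /\ Forall P l /\ bool_comb l p.

(* Every proof tree collapses to one safe inductive invariant: (Ind) contributes
   its predicate, (Cons) keeps the invariant, (Inc) conjoins the invariants of
   its two premises, and (Rev) negates the invariant of the reversed problem.
   So a proof with k inductions yields an invariant that is a Boolean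
   combination of k predicates from P, which (Ind) + (Cons) use directly.
   Without (Rev) no negation arises, and the invariant is a mere conjunction
   of predicates.

   For sharpness take propositional atoms p_1, p_2, ..., the formulas
   A_0 = false, A_(m+1) = p_(m+1) /\ ~ A_m, and the problem (~ A_n, false, A_n).
   Alternating (Rev) and (Inc) proves it with the n inductions p_n, ..., p_1.
   Any safe invariant is equivalent to ~ A_n, and A_n depends on each of
   p_1, ..., p_n, so fewer than n predicates do not suffice; a conjunction of
   atoms fails already at the all-false valuation, where ~ A_n holds. *)

From Stdlib Require Import List Arith Lia Classical FunctionalExtensionality FinFun.
Import ListNotations.

Definition reduct {S1 S2 : sig} (g : fsym S1 -> fsym S2) (h : rsym S1 -> rsym S2)
  (M : structure S2) : structure S1 :=
  @Struct S1 (dom M) (dom_inh _ M) (fun f => ifun M (g f)) (fun r => irel M (h r)).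

Definition term_nested_ind {S : sig} (Q : term S -> Prop)
  (HV : forall x, Q (Var x))
  (HA : forall f args, Forall Q args -> Q (App f args)) : forall t, Q t :=
  fix go t :=
    match t with
    | Var x => HV x
    | App f args =>
        HA f args
          ((fix go_list l : Forall Q l :=
              match l with
              | [] => Forall_nil Q
              | u :: l' => @Forall_cons _ Q u l' (go u) (go_list l')
              end) args)
    end.

Lemma eval_rn_term {S1 S2 : sig} (g : fsym S1 -> fsym S2) (h : rsym S1 -> rsym S2)
  (M : structure S2) (e : nat -> dom M) (t : term S1) :
  eval M e (rn_term g t) = eval (reduct g h M) e t.
Proof.
  induction t as [x | f args IH] using term_nested_ind; simpl; [reflexivity|].
  f_equal. rewrite map_map. apply map_ext_Forall. exact IH.
Qed.

Lemma sat_rn {S1 S2 : sig} (g : fsym S1 -> fsym S2) (h : rsym S1 -> rsym S2)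
  (M : structure S2) (p : formula S1) (e : nat -> dom M) :
  sat M e (rn g h p) <-> sat (reduct g h M) e p.
Proof.
  revert e; induction p; intro e; simpl; try tauto.
  - rewrite map_map. erewrite map_ext by (intro; apply (eval_rn_term g h)). tauto.
  - rewrite !(eval_rn_term g h). tauto.
  - rewrite IHp. tauto.
  - rewrite IHp1, IHp2. tauto.
  - rewrite IHp1, IHp2. tauto.
  - rewrite IHp1, IHp2. tauto.
  - split; intros H d; apply IHp, H.
  - split; intros [d H]; exists d; apply IHp, H.
Qed.

Lemma entails_unprimed {S : sig} (a b : formula S) (M : structure (sig2 S)) e :
  entails a b -> sat M e (unprimed a) -> sat M e (unprimed b).
Proof. intros Hab Ha. apply sat_rn, Hab, sat_rn, Ha. Qed.

Lemma entails_primed {S : sig} (a b : formula S) (M : structure (sig2 S)) e :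
  entails a b -> sat M e (primed a) -> sat M e (primed b).
Proof. intros Hab Ha. apply sat_rn, Hab, sat_rn, Ha. Qed.

Definition reduct_swap {S : sig} (M : structure (sig2 S)) : structure (sig2 S) :=
  @reduct (sig2 S) (sig2 S) swap swap M.

Lemma swap_swap_comp {A B : Type} (f : A + A -> B) : (fun x => f (swap (swap x))) = f.
Proof. apply functional_extensionality; intros [x|x]; reflexivity. Qed.

Lemma sat_inv_reduct_swap {S : sig} (M : structure (sig2 S)) e (t : formula (sig2 S)) :
  sat (reduct_swap M) e (inv t) <-> sat M e t.
Proof.
  destruct M as [D d f r]. unfold inv. rewrite sat_rn.
  unfold reduct_swap, reduct; simpl. rewrite !swap_swap_comp. reflexivity.
Qed.

Lemma sat_unprimed_reduct_swap {S : sig} (M : structure (sig2 S)) e (p : formula S) :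
  sat (reduct_swap M) e (unprimed p) <-> sat M e (primed p).
Proof. unfold unprimed, primed. rewrite !sat_rn. reflexivity. Qed.

Lemma sat_primed_reduct_swap {S : sig} (M : structure (sig2 S)) e (p : formula S) :
  sat (reduct_swap M) e (primed p) <-> sat M e (unprimed p).
Proof. unfold unprimed, primed. rewrite !sat_rn. reflexivity. Qed.

Definition unsat {S : sig} (p : formula S) : Prop := forall M e, ~ sat M e p.

Lemma unsat_inv {S : sig} (t : formula (sig2 S)) : unsat t -> unsat (inv t).
Proof. intros Ht M e H. apply (Ht (reduct_swap M) e), sat_rn, H. Qed.

Lemma closed_and {S : sig} (a b : formula S) : closed a -> closed b -> closed (FAnd a b).
Proof. intros [Wa Fa] [Wb Fb]; split; simpl; [tauto | rewrite Fa, Fb; reflexivity]. Qed.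

Lemma closed_not {S : sig} (a : formula S) : closed a -> closed (FNot a).
Proof. intros [Wa Fa]; split; simpl; auto. Qed.

Record safe_invariant {S : sig} (i : formula S) (t : formula (sig2 S)) (b : formula S)
  (th : formula S) : Prop := {
  invariant_init : entails i th;
  invariant_step : entails (FAnd (unprimed th) t) (primed th);
  invariant_safe : entails th (FNot b)
}.

Section SafeInvariantRules.
Context {S : sig}.
Implicit Types (i b th phi : formula S) (t : formula (sig2 S)).

Lemma safe_invariant_ind i t phi :
  entails i phi -> entails (FAnd (unprimed phi) t) (primed phi) ->
  safe_invariant i t (FNot phi) phi.
Proof. intros Hi Ht; split; [exact Hi | exact Ht | intros M e H HN; exact (HN H)]. Qed.

Lemma safe_invariant_cons i t b phi th :
  safe_invariant i t (FNot phi) th -> entails phi (FNot b) -> safe_invariant i t b th.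
Proof.
  intros [Hi Ht Hb] Hphi; split; [exact Hi | exact Ht |].
  intros M e H Hbe. apply (Hb M e H). intro Hp. exact (Hphi M e Hp Hbe).
Qed.

Lemma safe_invariant_inc i t b phi th1 th2 :
  safe_invariant i t (FNot phi) th1 ->
  safe_invariant (FAnd i phi) (FAnd t (FAnd (unprimed phi) (primed phi))) (FAnd b phi) th2 ->
  safe_invariant i t b (FAnd th1 th2).
Proof.
  intros [Hi1 Ht1 Hb1] [Hi2 Ht2 Hb2].
  assert (Hphi : entails th1 phi) by (intros M e H; apply NNPP, (Hb1 M e H)).
  split.
  - intros M e Hi. pose proof (Hi1 M e Hi) as H1.
    split; [exact H1 | apply (Hi2 M e); split; [exact Hi | exact (Hphi M e H1)]].
  - intros M e [[H1 H2] Ht]. pose proof (Ht1 M e (conj H1 Ht)) as H1'.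
    split; [exact H1'|]. apply (Ht2 M e). repeat split; auto.
    + exact (entails_unprimed _ _ M e Hphi H1).
    + exact (entails_primed _ _ M e Hphi H1').
  - intros M e [H1 H2] Hb. apply (Hb2 M e H2). split; [exact Hb | exact (Hphi M e H1)].
Qed.

Lemma safe_invariant_rev i t b th :
  safe_invariant b (inv t) i th -> safe_invariant i t b (FNot th).
Proof.
  intros [Hb Ht Hi]; split.
  - intros M e Hie Hth. exact (Hi M e Hth Hie).
  - intros M e [Hnth Hte] Hth'.
    apply Hnth, sat_primed_reduct_swap, Ht; split.
    + apply sat_unprimed_reduct_swap, Hth'.
    + apply sat_inv_reduct_swap, Hte.
  - intros M e Hnth Hbe. exact (Hnth (Hb M e Hbe)).
Qed.

Lemma deriv_of_safe_invariant X (P : formula S -> Prop) i t b th :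
  P th -> closed th -> safe_invariant i t b th -> deriv X P 1 i t b.
Proof.
  intros HP Hcl [Hi Ht Hb].
  apply d_cons with (phi := th); [exact Hcl | | exact Hb].
  apply d_ind; assumption.
Qed.

End SafeInvariantRules.

Inductive and_neg_comb {S : sig} (neg : bool) (L : list (formula S)) : formula S -> Prop :=
| anc_atom : forall p, In p L -> and_neg_comb neg L p
| anc_and : forall a b, and_neg_comb neg L a -> and_neg_comb neg L b ->
    and_neg_comb neg L (FAnd a b)
| anc_not : forall a, neg = true -> and_neg_comb neg L a -> and_neg_comb neg L (FNot a).

Section Combinations.
Context {S : sig}.

Lemma and_neg_comb_incl neg (L L' : list (formula S)) p :
  incl L L' -> and_neg_comb neg L p -> and_neg_comb neg L' p.
Proof. intros Hincl H; induction H; [apply anc_atom | apply anc_and | apply anc_not]; auto. Qed.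

Lemma and_neg_comb_bool_comb neg (L : list (formula S)) p :
  and_neg_comb neg L p -> bool_comb L p.
Proof. intro H; induction H; [apply bc_atom | apply bc_and | apply bc_not]; auto. Qed.

Lemma and_neg_comb_sat_agree neg (L : list (formula S)) th (M1 M2 : structure S) e1 e2 :
  and_neg_comb neg L th -> (forall p, In p L -> (sat M1 e1 p <-> sat M2 e2 p)) ->
  (sat M1 e1 th <-> sat M2 e2 th).
Proof.
  intros H Hatoms; induction H as [p Hp | a c _ IHa _ IHc | a _ _ IHa]; simpl.
  - exact (Hatoms p Hp).
  - rewrite IHa, IHc. reflexivity.
  - rewrite IHa. reflexivity.
Qed.

Lemma and_comb_false (L : list (formula S)) th (M : structure S) e :
  and_neg_comb false L th -> (forall p, In p L -> ~ sat M e p) -> ~ sat M e th.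
Proof. intros H Hatoms; induction H; simpl; [auto | tauto | discriminate]. Qed.

End Combinations.

Lemma deriv_safe_invariant {S : sig} X (P : formula S -> Prop) k i t b :
  deriv X P k i t b ->
  exists L th, length L = k /\ Forall P L /\ and_neg_comb (has_rev X) L th /\
    closed th /\ safe_invariant i t b th.
Proof.
  induction 1 as [i t phi HP Hcl Hi Ht
                 | k i t b phi Hcl _ (L & th & HL & HPL & Hc & Hclth & Hinv) Hphi
                 | k1 k2 i t b phi HX Hcl _ (L1 & th1 & HL1 & HP1 & Hc1 & Hcl1 & Hinv1)
                     _ (L2 & th2 & HL2 & HP2 & Hc2 & Hcl2 & Hinv2)
                 | k i t b HX _ (L & th & HL & HPL & Hc & Hclth & Hinv)].
  - exists [phi], phi. split; [|split; [|split; [|split]]]; auto.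
    + apply anc_atom; simpl; auto.
    + apply safe_invariant_ind; assumption.
  - exists L, th. split; [|split; [|split; [|split]]]; auto.
    eapply safe_invariant_cons; eassumption.
  - exists (L1 ++ L2), (FAnd th1 th2). split; [|split; [|split; [|split]]].
    + rewrite length_app; auto.
    + apply Forall_app; auto.
    + apply anc_and; eapply and_neg_comb_incl; eauto; intros x Hx; apply in_or_app; auto.
    + apply closed_and; auto.
    + eapply safe_invariant_inc; eassumption.
  - exists L, (FNot th). split; [|split; [|split; [|split]]].
    + exact HL.
    + exact HPL.
    + apply anc_not; auto.
    + apply closed_not; auto.
    + apply safe_invariant_rev; exact Hinv.
Qed.

Lemma provable_n_FBI_provable_F {S : sig} (P : formula S -> Prop) n i t b :
  provable_n SysFBI P n i t b -> provable SysF (Pn P n) i t b.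
Proof.
  intros [Hs (k & Hk & D)]. split; [exact Hs|]. exists 1.
  destruct (deriv_safe_invariant _ _ _ _ _ _ D) as (L & th & HL & HP & Hc & Hcl & Hinv).
  apply deriv_of_safe_invariant with th; [| exact Hcl | exact Hinv].
  exists L. split; [lia|]. split; [exact HP|]. eapply and_neg_comb_bool_comb, Hc.
Qed.

Definition prop_sig : sig := Sig Empty_set nat (fun _ => 0) (fun _ => 0).

Definition atom (k : nat) : formula prop_sig := @FRel prop_sig k [].

Definition is_atom (p : formula prop_sig) : Prop := exists k, p = atom k.

Fixpoint alt (m : nat) : formula prop_sig :=
  match m with
  | 0 => FFalse
  | S m' => FAnd (atom m) (FNot (alt m'))
  end.

Lemma closed_atom k : closed (atom k).
Proof. split; simpl; auto. Qed.

Lemma closed_alt m : closed (alt m).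
Proof.
  induction m; simpl; [split; simpl; auto |].
  apply closed_and; [apply closed_atom | apply closed_not, IHm].
Qed.

Lemma deriv_ind_vacuous {S : sig} X (P : formula S -> Prop) i t phi :
  unsat t -> P phi -> closed phi -> entails i phi -> deriv X P 1 i t (FNot phi).
Proof.
  intros Ht HP Hcl Hi. apply d_ind; auto.
  intros M e [_ Hte]. destruct (Ht M e Hte).
Qed.

(* After (Rev), p_(m+1) holds initially and is vacuously inductive; (Inc)
   then restricts to p_(m+1), under which A_(m+1) is ~ A_m, so the restricted
   problem is an instance of the claim for m. *)
Lemma alt_FBI_derivable m i t b :
  unsat t -> entails b (alt (S m)) -> entails i (FNot (alt (S m))) ->
  deriv SysFBI is_atom (S m) i t b.
Proof.
  revert i t b; induction m as [|m IH]; intros i t b Ht Hb Hi.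
  - apply d_rev; [reflexivity|].
    apply d_cons with (phi := atom 1); [apply closed_atom | |].
    + apply deriv_ind_vacuous; [apply unsat_inv, Ht | exists 1; reflexivity
                              | apply closed_atom | intros M e H; apply (Hb M e H)].
    + intros M e Hp Hie. apply (Hi M e Hie). split; [exact Hp | simpl; auto].
  - apply d_rev; [reflexivity|].
    change (S (S m)) with (1 + S m).
    apply d_inc with (phi := atom (S (S m))); [reflexivity | apply closed_atom | |].
    + apply deriv_ind_vacuous; [apply unsat_inv, Ht | eexists; reflexivity
                              | apply closed_atom | intros M e H; apply (Hb M e H)].
    + apply IH.
      * intros M e [H _]. exact (unsat_inv t Ht M e H).
      * intros M e [Hie Hp]. apply NNPP. intro Ha. apply (Hi M e Hie). split; assumption.
      * intros M e [Hbe Hp]. exact (proj2 (Hb M e Hbe)).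
Qed.

Definition valuation (v : nat -> bool) : structure prop_sig :=
  @Struct prop_sig unit tt (fun _ _ => tt) (fun r _ => v r = true).

Lemma alt_false v m e : v m = false -> ~ sat (valuation v) e (alt m).
Proof. destruct m; simpl; [auto | intros Hv [Hm _]; congruence]. Qed.

Definition flip_at (j : nat) (bb : bool) (k : nat) : bool :=
  if k =? j then bb else j <? k.

Lemma alt_flip j e : 1 <= j -> forall m, j <= m ->
  (sat (valuation (flip_at j true)) e (alt m) <-> ~ sat (valuation (flip_at j false)) e (alt m)).
Proof.
  intros Hj m Hm. induction Hm as [|m Hm IH].
  - destruct j as [|j]; [lia|]. simpl.
    unfold flip_at at 1 3; rewrite Nat.eqb_refl.
    assert (Hbelow : forall bb, flip_at (S j) bb j = false).
    { intro bb. unfold flip_at. rewrite (proj2 (Nat.eqb_neq j (S j))) by lia.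
      apply Nat.ltb_ge. lia. }
    pose proof (alt_false (flip_at (S j) true) j e (Hbelow true)).
    pose proof (alt_false (flip_at (S j) false) j e (Hbelow false)).
    intuition discriminate.
  - simpl. unfold flip_at at 1 3.
    rewrite (proj2 (Nat.eqb_neq (S m) j)), (proj2 (Nat.ltb_lt j (S m))) by lia.
    tauto.
Qed.

Lemma missing_atom n (L : list (formula prop_sig)) :
  length L < n -> exists j, 1 <= j <= n /\ ~ In (atom j) L.
Proof.
  intro Hlen. apply NNPP. intro Hall.
  assert (Hincl : incl (map atom (seq 1 n)) L).
  { intros x Hx. apply in_map_iff in Hx. destruct Hx as [j [<- Hj]].
    apply in_seq in Hj. apply NNPP. intro H. apply Hall. exists j. split; [lia | exact H]. }
  assert (Hnodup : NoDup (map atom (seq 1 n))).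
  { apply Injective_map_NoDup; [intros a c H; injection H; auto | apply seq_NoDup]. }
  pose proof (NoDup_incl_length Hnodup Hincl) as Hle.
  rewrite length_map, length_seq in Hle. lia.
Qed.

Lemma safe_invariant_alt_equiv t m th (M : structure prop_sig) e :
  safe_invariant (FNot (alt m)) t (alt m) th -> (sat M e th <-> ~ sat M e (alt m)).
Proof. intros [Hi _ Hb]. split; [apply Hb | apply Hi]. Qed.

Lemma alt_needs_n_inductions n t k :
  1 <= n -> k < n -> ~ deriv SysFBI is_atom k (FNot (alt n)) t (alt n).
Proof.
  intros Hn Hk D.
  destruct (deriv_safe_invariant _ _ _ _ _ _ D) as (L & th & HL & HP & Hc & _ & Hinv).
  destruct (missing_atom n L ltac:(lia)) as (j & Hj & Hnotin).
  set (e := fun _ : nat => tt).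
  assert (Hagree : sat (valuation (flip_at j true)) e th <-> sat (valuation (flip_at j false)) e th).
  { apply (and_neg_comb_sat_agree (has_rev SysFBI) L); [exact Hc|].
    intros p Hin. rewrite Forall_forall in HP. destruct (HP p Hin) as [k' ->].
    assert (k' <> j) by (intro; subst; contradiction).
    simpl. unfold flip_at. rewrite (proj2 (Nat.eqb_neq k' j)) by assumption. tauto. }
  rewrite !(safe_invariant_alt_equiv _ _ _ _ _ Hinv) in Hagree.
  pose proof (alt_flip j e ltac:(lia) n ltac:(lia)).
  tauto.
Qed.

Lemma alt_not_derivable_without_rev X t k n :
  has_rev X = false -> ~ deriv X is_atom k (FNot (alt n)) t (alt n).
Proof.
  intros HX D.
  destruct (deriv_safe_invariant _ _ _ _ _ _ D) as (L & th & _ & HP & Hc & _ & [Hi _ _]).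
  rewrite HX in Hc.
  set (e := fun _ : nat => tt).
  apply (and_comb_false L th (valuation (fun _ => false)) e Hc).
  - intros p Hin. rewrite Forall_forall in HP. destruct (HP p Hin) as [k' ->].
    simpl. discriminate.
  - apply (Hi (valuation (fun _ => false)) e), alt_false. reflexivity.
Qed.

Lemma alt_problem_sharp n : 0 < n ->
  (forall phi, is_atom phi -> closed phi) /\
  provable_n SysFBI is_atom n (FNot (alt n)) FFalse (alt n) /\
  ~ provable_n SysFBI is_atom (n - 1) (FNot (alt n)) FFalse (alt n) /\
  ~ provable SysFI is_atom (FNot (alt n)) FFalse (alt n) /\
  ~ provable SysF is_atom (FNot (alt n)) FFalse (alt n).
Proof.
  intro Hn.
  assert (Hs : safety (FNot (alt n)) FFalse (alt n)).
  { split; [apply closed_not, closed_alt | split; [split; simpl; auto | apply closed_alt]]. }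
  split; [|split; [|split; [|split]]].
  - intros p [k ->]. apply closed_atom.
  - split; [exact Hs|]. exists n. split; [reflexivity|]. destruct n as [|m]; [lia|].
    apply alt_FBI_derivable; intros M e H; exact H.
  - intros [_ (k & Hk & D)]. exact (alt_needs_n_inductions n _ k Hn ltac:(lia) D).
  - intros [_ [k D]]. exact (alt_not_derivable_without_rev SysFI _ k n eq_refl D).
  - intros [_ [k D]]. exact (alt_not_derivable_without_rev SysF _ k n eq_refl D).
Qed.

Theorem theorem4p14 :
  (forall (S : sig) (P : formula S -> Prop) (n : nat)
          (i : formula S) (t : formula (sig2 S)) (b : formula S),
     (forall phi, P phi -> closed phi) ->
     provable_n SysFBI P n i t b ->
     provable SysF (Pn P n) i t b)
  /\
  (forall n : nat, 0 < n ->
     exists (S : sig) (P : formula S -> Prop)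
            (i : formula S) (t : formula (sig2 S)) (b : formula S),
       (forall phi, P phi -> closed phi) /\
       provable_n SysFBI P n i t b /\
       ~ provable_n SysFBI P (n - 1) i t b /\
       ~ provable SysFI P i t b /\
       ~ provable SysF P i t b).
Proof.
  split.
  - intros S P n i t b _. apply provable_n_FBI_provable_F.
  - intros n Hn. exists prop_sig, is_atom, (FNot (alt n)), FFalse, (alt n).
    apply alt_problem_sharp, Hn.
Qed.
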